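(* Let $N,\mu,\beta,\sigma,\gamma,p>0$ and $0<\rho<1$ and consider $$\begin{aligned}S'&=\mu N-\tfrac{\beta}{N}S(1-\rho)I-\tfrac{p}{N}S-\mu S, & E'&=\tfrac{\beta}{N}S(1-\rho)I-(\sigma+\mu) E, & I'&=\sigma E-(\gamma+\mu) I,\\ R'&=\gamma I-\mu R, & V'&=\tfrac{p}{N}S-\mu V.\end{aligned}$$ Let $\mathcal{R}_0=\dfrac{\mu N\sigma\beta(1-\rho)}{(\sigma+\mu)(\gamma+\mu)(p+\mu N)}$. If $\mathcal{R}_0>1$, then the endemic equilibrium $P^e=(S^e,E^e,I^e,R^e,V^e)$ given by $$S^e=\frac{(\sigma+\mu)(\gamma+\mu)N}{\sigma\beta(1-\rho)},\quad I^e=\frac{\mu N\sigma\beta(1-\rho)-(\sigma+\mu)(\gamma+\mu)(p+\mu N)}{(\sigma+\mu)(\gamma+\mu)\beta(1-\rho)},$$ $$E^e=\frac{\gamma+\mu}{\sigma}I^e,\quad R^e=\frac{\gamma}{\mu}I^e,\quad V^e=\frac{p}{\mu N}S^e$$ is asymptotically stable.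
   Context: SEIR model with vaccination at constant effective rate $p$ and equal birth/death rate $\mu$; $\mathcal{R}_0$ is the reproductive number, and $\mathcal{R}_0>1$ is equivalent to $I^e>0$. *)

From Stdlib Require Import Reals Lra.
From Coquelicot Require Import Coquelicot.
Open Scope R_scope.

Record state := mkState { sS : R; sE : R; sI : R; sR : R; sV : R }.

Definition seirv_field (N mu beta sigma gamma p rho : R) (X : state) : state :=
  let S := sS X in let E := sE X in let I := sI X in
  let Rr := sR X in let V := sV X in
  mkState
    (mu * N - beta / N * S * (1 - rho) * I - p / N * S - mu * S)
    (beta / N * S * (1 - rho) * I - (sigma + mu) * E)
    (sigma * E - (gamma + mu) * I)
    (gamma * I - mu * Rr)
    (p / N * S - mu * V).

Definition sdist (X Y : state) : R :=
  sqrt ((sS X - sS Y)^2 + (sE X - sE Y)^2 + (sI X - sI Y)^2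
        + (sR X - sR Y)^2 + (sV X - sV Y)^2).

Definition zero_state : state := mkState 0 0 0 0 0.

Definition is_solution_on (f : state -> state) (x : R -> state) (T : Rbar) : Prop :=
  (forall t, 0 < t -> Rbar_lt t T ->
     is_derive (fun s => sS (x s)) t (sS (f (x t))) /\
     is_derive (fun s => sE (x s)) t (sE (f (x t))) /\
     is_derive (fun s => sI (x s)) t (sI (f (x t))) /\
     is_derive (fun s => sR (x s)) t (sR (f (x t))) /\
     is_derive (fun s => sV (x s)) t (sV (f (x t)))) /\
  filterlim (fun s => sS (x s)) (at_right 0) (locally (sS (x 0))) /\
  filterlim (fun s => sE (x s)) (at_right 0) (locally (sE (x 0))) /\
  filterlim (fun s => sI (x s)) (at_right 0) (locally (sI (x 0))) /\
  filterlim (fun s => sR (x s)) (at_right 0) (locally (sR (x 0))) /\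
  filterlim (fun s => sV (x s)) (at_right 0) (locally (sV (x 0))).

Definition is_equilibrium (f : state -> state) (Pe : state) : Prop :=
  f Pe = zero_state.

Definition lyap_stable (f : state -> state) (Pe : state) : Prop :=
  (forall eps, 0 < eps -> exists delta, 0 < delta /\
     forall (T : Rbar) (x : R -> state), is_solution_on f x T ->
       sdist (x 0) Pe < delta ->
       forall t, 0 <= t -> Rbar_lt t T -> sdist (x t) Pe < eps) /\
  (exists delta, 0 < delta /\ forall X0, sdist X0 Pe < delta ->
     exists x, is_solution_on f x p_infty /\ x 0 = X0).

Definition attractive (f : state -> state) (Pe : state) : Prop :=
  exists delta, 0 < delta /\
    forall x, is_solution_on f x p_infty -> sdist (x 0) Pe < delta ->
      is_lim (fun t => sdist (x t) Pe) p_infty 0.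

Definition asymptotically_stable (f : state -> state) (Pe : state) : Prop :=
  lyap_stable f Pe /\ attractive f Pe.

Definition repro_number (N mu beta sigma gamma p rho : R) : R :=
  mu * N * sigma * beta * (1 - rho) /
  ((sigma + mu) * (gamma + mu) * (p + mu * N)).

Definition endemic_eq (N mu beta sigma gamma p rho : R) : state :=
  let Se := (sigma + mu) * (gamma + mu) * N / (sigma * beta * (1 - rho)) in
  let Ie := (mu * N * sigma * beta * (1 - rho)
             - (sigma + mu) * (gamma + mu) * (p + mu * N))
            / ((sigma + mu) * (gamma + mu) * beta * (1 - rho)) in
  mkState Se ((gamma + mu) / sigma * Ie) Ie (gamma / mu * Ie) (p / (mu * N) * Se).

(* In relative coordinates [Y = (X - Pe) / Pe] around the endemic equilibrium the model becomes
   [Y' = rel_field Y]: a linear field plus the single quadratic term [m x z], where [x] and [z]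
   are the relative deviations of [S] and [I].  The quadratic form [lyap], a weighted sum of
   squares with a small cross term [x z], is comparable to [|Y|^2] and decreases at rate
   [|Y|^2] along the field as long as [|x|] is small.  Hence its small sublevel sets are forward
   invariant and [lyap] decays exponentially on them, which gives stability and attractivity.
   Solutions starting there exist for all time: clamped outside a cube, the field is bounded
   and globally Lipschitz, so Picard iteration yields a global solution, and this solution
   never leaves the sublevel set, on which the clamp is inactive. *)

From Stdlib Require Import Reals Lra Lia Psatz Classical.
From Coquelicot Require Import Coquelicot.
Open Scope R_scope.

(** * Monotonicity and decay of real functions *)

Lemma filterlim_Rplus_fun {T} (F : (T -> Prop) -> Prop) {FF : Filter F} (f g : T -> R) lf lg :
  filterlim f F (locally lf) -> filterlim g F (locally lg) ->
  filterlim (fun s => f s + g s) F (locally (lf + lg)).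
Proof.
  intros Hf Hg. exact (filterlim_comp_2 f g Rplus Hf Hg (@filterlim_plus _ R_NormedModule lf lg)).
Qed.

Lemma filterlim_Rmult_fun {T} (F : (T -> Prop) -> Prop) {FF : Filter F} (f g : T -> R) lf lg :
  filterlim f F (locally lf) -> filterlim g F (locally lg) ->
  filterlim (fun s => f s * g s) F (locally (lf * lg)).
Proof.
  intros Hf Hg. exact (filterlim_comp_2 f g Rmult Hf Hg (@filterlim_mult R_AbsRing lf lg)).
Qed.

Lemma filterlim_at_right_of_continuous (h : R -> R) a :
  continuous h a -> filterlim h (at_right a) (locally (h a)).
Proof. apply filterlim_filter_le_1, filter_le_within. Qed.

Lemma filterlim_at_right_of_derive (h : R -> R) a l :
  is_derive h a l -> filterlim h (at_right a) (locally (h a)).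
Proof.
  intros Hd. apply filterlim_at_right_of_continuous.
  apply (ex_derive_continuous (V := R_NormedModule)). now exists l.
Qed.

Lemma continuous_ball (h : R -> R) a eps : continuous h a -> 0 < eps ->
  exists d, 0 < d /\ forall u, Rabs (u - a) < d -> Rabs (h u - h a) < eps.
Proof.
  intros Hc He.
  destruct (proj1 (filterlim_locally h (h a)) Hc (mkposreal eps He)) as [d Hd].
  exists d; split; [apply cond_pos|]. intros u Hu. exact (Hd u Hu).
Qed.

Lemma at_right_ball (h : R -> R) a l eps : filterlim h (at_right a) (locally l) -> 0 < eps ->
  exists d, 0 < d /\ forall u, a < u < a + d -> Rabs (h u - l) < eps.
Proof.
  intros Hc He.
  destruct (proj1 (filterlim_locally h l) Hc (mkposreal eps He)) as [d Hd].
  exists d; split; [apply cond_pos|]. intros u Hu. apply (Hd u); [|lra].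
  change (Rabs (u - a) < d). rewrite Rabs_right; lra.
Qed.

Lemma le_of_derive_nonpos (h d : R -> R) a b : a < b ->
  filterlim h (at_right a) (locally (h a)) ->
  (forall u, a < u <= b -> is_derive h u (d u)) ->
  (forall u, a < u <= b -> d u <= 0) -> h b <= h a.
Proof.
  intros Hab Hra Hd Hneg.
  assert (Hmid : forall e, a < e < b -> h b <= h e).
  { intros e He.
    destruct (MVT_gen h e b d) as [c [Hc Heq]];
      rewrite ?Rmin_left, ?Rmax_right in * by lra.
    - intros u Hu. apply Hd; lra.
    - intros u Hu. apply continuity_pt_filterlim.
      apply (ex_derive_continuous (V := R_NormedModule)). exists (d u). apply Hd; lra.
    - assert (d c * (b - e) <= 0) by (apply Rmult_le_0_r; [apply Hneg|]; lra).
      lra. }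
  apply Rnot_lt_le. intros Hlt.
  destruct (at_right_ball h a (h a) (h b - h a) Hra) as [r [Hr Hball]]; [lra|].
  set (e := a + Rmin r (b - a) / 2).
  assert (Hm : 0 < Rmin r (b - a) <= r /\ Rmin r (b - a) <= b - a).
  { split; [split; [apply Rmin_pos|apply Rmin_l]|apply Rmin_r]; lra. }
  assert (He : Rabs (h e - h a) < h b - h a) by (apply Hball; unfold e; lra).
  assert (h b <= h e) by (apply Hmid; unfold e; lra).
  apply Rabs_def2 in He. lra.
Qed.

Lemma real_induction (P : R -> Prop) a b : a <= b ->
  (forall s, a <= s <= b -> (forall u, a <= u < s -> P u) -> P s) ->
  (forall s, a <= s < b -> (forall u, a <= u <= s -> P u) ->
     exists d, 0 < d /\ forall u, s < u < s + d -> u <= b -> P u) ->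
  forall s, a <= s <= b -> P s.
Proof.
  intros Hab Hclosed Hopen.
  set (A := fun s => a <= s <= b /\ forall u, a <= u <= s -> P u).
  assert (HAa : A a).
  { split; [lra|]. intros u Hu. replace u with a by lra.
    apply Hclosed; [lra|]. intros v Hv; lra. }
  destruct (completeness A) as [tau [Hub Hlub]].
  { exists b. intros s [Hs _]; lra. }
  { now exists a. }
  assert (Htau : a <= tau <= b).
  { split; [now apply Hub|]. apply Hlub. intros s [Hs _]; lra. }
  assert (Hbelow : forall u, a <= u < tau -> P u).
  { intros u Hu. apply NNPP. intros HPu.
    assert (tau <= u); [|lra].
    apply Hlub. intros s [Hs HPs]. apply Rnot_lt_le. intros Hus.
    apply HPu, HPs; lra. }
  assert (HPtau : P tau) by (apply Hclosed; auto).
  assert (Htaub : tau = b).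
  { apply NNPP. intros Hne.
    destruct (Hopen tau) as [d [Hd Hnext]]; [lra| |].
    { intros u Hu. destruct (Req_dec u tau) as [->|]; [auto|]. apply Hbelow; lra. }
    set (s := tau + Rmin d (b - tau) / 2).
    assert (Hm : 0 < Rmin d (b - tau) <= d /\ Rmin d (b - tau) <= b - tau).
    { split; [split; [apply Rmin_pos|apply Rmin_l]|apply Rmin_r]; lra. }
    assert (A s); [|assert (s <= tau) by (now apply Hub); unfold s in *; lra].
    split; [unfold s; lra|]. intros u Hu.
    destruct (Rlt_le_dec u tau) as [Hlt|Hge]; [apply Hbelow; lra|].
    destruct (Req_dec u tau) as [->|Hne']; [auto|].
    apply Hnext; unfold s in *; lra. }
  intros s Hs. destruct (Req_dec s tau) as [->|]; [auto|]. apply Hbelow; lra.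
Qed.

Lemma le_init_of_derive_nonpos_on_sublevel (h d : R -> R) l b :
  filterlim h (at_right 0) (locally (h 0)) ->
  (forall u, 0 < u <= b -> is_derive h u (d u)) ->
  (forall u, 0 < u <= b -> h u < l -> d u <= 0) -> h 0 < l ->
  forall t, 0 <= t <= b -> h t <= h 0.
Proof.
  intros Hr0 Hd Hneg Hl t Ht.
  apply (real_induction (fun u => h u <= h 0) 0 b); [lra| | |exact Ht].
  - intros s Hs Hbefore. destruct (Req_dec s 0) as [->|Hs0]; [lra|].
    apply Rnot_lt_le. intros Hlt.
    assert (Hc : continuous h s).
    { apply (ex_derive_continuous (V := R_NormedModule)). exists (d s). apply Hd; lra. }
    destruct (continuous_ball h s (h s - h 0) Hc) as [r [Hr Hball]]; [lra|].
    set (u := Rmax 0 (s - r / 2)).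
    assert (Hu : 0 <= u /\ s - r / 2 <= u /\ u < s).
    { split; [apply Rmax_l|split; [apply Rmax_r|apply Rmax_lub_lt; lra]]. }
    assert (Habs : Rabs (h u - h s) < h s - h 0) by (apply Hball; rewrite Rabs_left; lra).
    assert (h u <= h 0) by (apply Hbefore; lra).
    apply Rabs_def2 in Habs. lra.
  - intros s Hs Hupto.
    assert (Hhs : h s <= h 0) by (apply Hupto; lra).
    assert (Hrs : filterlim h (at_right s) (locally (h s))).
    { destruct (Req_dec s 0) as [->|]; [exact Hr0|].
      apply (filterlim_at_right_of_derive h s (d s)), Hd; lra. }
    destruct (at_right_ball h s (h s) (l - h s) Hrs) as [r [Hr Hball]]; [lra|].
    exists r. split; [exact Hr|]. intros u Hu Hub.
    assert (h u <= h s); [|lra].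
    apply (le_of_derive_nonpos h d s u); [lra|exact Hrs| |].
    + intros v Hv. apply Hd; lra.
    + intros v Hv. apply Hneg; [lra|].
      assert (Habs : Rabs (h v - h s) < l - h s) by (apply Hball; lra).
      apply Rabs_def2 in Habs. lra.
Qed.

Lemma le_exp_decay (h d : R -> R) k t : 0 <= t ->
  filterlim h (at_right 0) (locally (h 0)) ->
  (forall u, 0 < u <= t -> is_derive h u (d u)) ->
  (forall u, 0 < u <= t -> d u <= - k * h u) ->
  h t <= h 0 * exp (- k * t).
Proof.
  intros Ht Hr0 Hd Hdecay.
  set (g := fun s => exp (k * s) * h s).
  assert (Hg : g t <= g 0).
  { destruct (Req_dec t 0) as [->|Ht0]; [lra|].
    apply (le_of_derive_nonpos g (fun u => k * exp (k * u) * h u + exp (k * u) * d u));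
      [lra| | |].
    - apply (filterlim_Rmult_fun _ (fun s => exp (k * s)) h); [|exact Hr0].
      apply (filterlim_at_right_of_continuous (fun s => exp (k * s))).
      apply (ex_derive_continuous (V := R_NormedModule)). auto_derive. exact I.
    - intros u Hu. apply (is_derive_mult (fun s => exp (k * s)) h); [|apply Hd; lra|].
      + auto_derive; [exact I|ring].
      + intros; apply Rmult_comm.
    - intros u Hu. assert (He := exp_pos (k * u)). specialize (Hdecay u Hu).
      assert (exp (k * u) * d u <= exp (k * u) * (- k * h u)) by (apply Rmult_le_compat_l; lra).
      lra. }
  unfold g in Hg. rewrite Rmult_0_r, exp_0, Rmult_1_l in Hg.
  replace (h t) with (exp (k * t) * h t * exp (- k * t)).
  - apply Rmult_le_compat_r; [apply Rlt_le, exp_pos|exact Hg].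
  - rewrite Rmult_comm, <- Rmult_assoc, <- exp_plus.
    replace (- k * t + k * t) with 0 by ring. rewrite exp_0. ring.
Qed.

Lemma is_lim_of_sq_le_exp (g : R -> R) C k : 0 < k ->
  (forall t, 0 <= t -> 0 <= g t /\ g t ^ 2 <= C * exp (- k * t)) -> is_lim g p_infty 0.
Proof.
  intros Hk Hg. apply is_lim_spec. intros [eps He]; simpl.
  exists (Rmax 0 (Rabs C / (k * eps ^ 2))). intros t Ht.
  assert (Ht0 : 0 <= t) by (pose proof (Rmax_l 0 (Rabs C / (k * eps ^ 2))); lra).
  assert (HtC : Rabs C / (k * eps ^ 2) < t) by (pose proof (Rmax_r 0 (Rabs C / (k * eps ^ 2))); lra).
  destruct (Hg t Ht0) as [Hpos Hsq].
  assert (Heps2 : 0 < eps ^ 2) by (apply pow_lt; lra).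
  assert (HC : Rabs C < eps ^ 2 * exp (k * t)).
  { pose proof (exp_ineq1_le (k * t)).
    apply (Rmult_lt_compat_l (k * eps ^ 2)) in HtC; [|apply Rmult_lt_0_compat; lra].
    replace (k * eps ^ 2 * (Rabs C / (k * eps ^ 2))) with (Rabs C) in HtC by (field; lra).
    nra. }
  assert (Hexp : C * exp (- k * t) < eps ^ 2).
  { replace (- k * t) with (- (k * t)) by ring. rewrite exp_Ropp.
    apply (Rmult_lt_reg_r (exp (k * t))); [apply exp_pos|].
    rewrite Rmult_assoc, Rinv_l by (apply Rgt_not_eq, exp_pos).
    pose proof (Rle_abs C). lra. }
  rewrite Rminus_0_r, Rabs_right by lra.
  apply Rnot_le_lt. intros Hle. assert (eps ^ 2 <= g t ^ 2) by (apply pow_incr; lra). lra.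
Qed.

Definition coord (i : nat) (X : state) : R :=
  match i with
  | 0%nat => sS X | 1%nat => sE X | 2%nat => sI X | 3%nat => sR X | 4%nat => sV X | _ => 0
  end.

Definition state_of (f : nat -> R) : state :=
  mkState (f 0%nat) (f 1%nat) (f 2%nat) (f 3%nat) (f 4%nat).

Definition dist1 (X Y : state) : R :=
  Rabs (sS X - sS Y) + Rabs (sE X - sE Y) + Rabs (sI X - sI Y)
  + Rabs (sR X - sR Y) + Rabs (sV X - sV Y).

Definition sqnorm (Y : state) : R :=
  sS Y * sS Y + sE Y * sE Y + sI Y * sI Y + sR Y * sR Y + sV Y * sV Y.

Definition sub_state (X Y : state) : state :=
  mkState (sS X - sS Y) (sE X - sE Y) (sI X - sI Y) (sR X - sR Y) (sV X - sV Y).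

Definition hadamard (w Y : state) : state :=
  mkState (sS w * sS Y) (sE w * sE Y) (sI w * sI Y) (sR w * sR Y) (sV w * sV Y).

Lemma sqnorm_nonneg Y : 0 <= sqnorm Y.
Proof.
  unfold sqnorm. pose proof (Rle_0_sqr (sS Y)). pose proof (Rle_0_sqr (sE Y)).
  pose proof (Rle_0_sqr (sI Y)). pose proof (Rle_0_sqr (sR Y)). pose proof (Rle_0_sqr (sV Y)).
  unfold Rsqr in *. lra.
Qed.

Lemma sqnorm_pos P : 0 < sS P -> 0 < sqnorm P.
Proof.
  intros H. unfold sqnorm. pose proof (Rle_0_sqr (sE P)). pose proof (Rle_0_sqr (sI P)).
  pose proof (Rle_0_sqr (sR P)). pose proof (Rle_0_sqr (sV P)). unfold Rsqr in *. nra.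
Qed.

Lemma sdist_sqnorm X Y : sdist X Y = sqrt (sqnorm (sub_state X Y)).
Proof. unfold sdist, sqnorm, sub_state; simpl. f_equal. ring. Qed.

Lemma sqnorm_hadamard_le w Y : sqnorm (hadamard w Y) <= sqnorm w * sqnorm Y.
Proof.
  destruct w as [w1 w2 w3 w4 w5], Y as [y1 y2 y3 y4 y5]. unfold sqnorm, hadamard; simpl.
  pose proof (Rle_0_sqr w1). pose proof (Rle_0_sqr w2). pose proof (Rle_0_sqr w3).
  pose proof (Rle_0_sqr w4). pose proof (Rle_0_sqr w5). pose proof (Rle_0_sqr y1).
  pose proof (Rle_0_sqr y2). pose proof (Rle_0_sqr y3). pose proof (Rle_0_sqr y4).
  pose proof (Rle_0_sqr y5). unfold Rsqr in *. nra.
Qed.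

Lemma lt5_cases i : (i < 5)%nat -> i = 0%nat \/ i = 1%nat \/ i = 2%nat \/ i = 3%nat \/ i = 4%nat.
Proof. lia. Qed.

Lemma coord_state_of i f : (i < 5)%nat -> coord i (state_of f) = f i.
Proof. intros Hi. now destruct (lt5_cases i Hi) as [->|[->|[->|[->| ->]]]]. Qed.

Lemma state_eq X Y : (forall i, (i < 5)%nat -> coord i X = coord i Y) -> X = Y.
Proof.
  intros H. destruct X, Y.
  specialize (H 0%nat) as H0. specialize (H 1%nat) as H1. specialize (H 2%nat) as H2.
  specialize (H 3%nat) as H3. specialize (H 4%nat) as H4. simpl in *.
  rewrite H0, H1, H2, H3, H4 by lia. reflexivity.
Qed.

Lemma dist1_nonneg X Y : 0 <= dist1 X Y.
Proof.
  unfold dist1.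
  pose proof (Rabs_pos (sS X - sS Y)). pose proof (Rabs_pos (sE X - sE Y)).
  pose proof (Rabs_pos (sI X - sI Y)). pose proof (Rabs_pos (sR X - sR Y)).
  pose proof (Rabs_pos (sV X - sV Y)). lra.
Qed.

Lemma coord_le_dist1 X Y i : Rabs (coord i X - coord i Y) <= dist1 X Y.
Proof.
  unfold dist1.
  pose proof (Rabs_pos (sS X - sS Y)). pose proof (Rabs_pos (sE X - sE Y)).
  pose proof (Rabs_pos (sI X - sI Y)). pose proof (Rabs_pos (sR X - sR Y)).
  pose proof (Rabs_pos (sV X - sV Y)).
  do 5 (destruct i as [|i]; [simpl; lra|]). simpl. rewrite Rminus_0_r, Rabs_R0. lra.
Qed.

Lemma dist1_le X Y C : (forall i, (i < 5)%nat -> Rabs (coord i X - coord i Y) <= C) ->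
  dist1 X Y <= 5 * C.
Proof.
  intros H. unfold dist1.
  pose proof (H 0%nat ltac:(lia)). pose proof (H 1%nat ltac:(lia)).
  pose proof (H 2%nat ltac:(lia)). pose proof (H 3%nat ltac:(lia)).
  pose proof (H 4%nat ltac:(lia)). simpl in *. lra.
Qed.

Lemma is_solution_on_coord F x T : is_solution_on F x T <->
  (forall i t, (i < 5)%nat -> 0 < t -> Rbar_lt t T ->
     is_derive (fun s => coord i (x s)) t (coord i (F (x t)))) /\
  (forall i, (i < 5)%nat ->
     filterlim (fun s => coord i (x s)) (at_right 0) (locally (coord i (x 0)))).
Proof.
  split.
  - intros [Hd Hc]. split.
    + intros i t Hi Ht HT. destruct (Hd t Ht HT) as (? & ? & ? & ? & ?).
      now destruct (lt5_cases i Hi) as [->|[->|[->|[->| ->]]]].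
    + intros i Hi. destruct Hc as (? & ? & ? & ? & ?).
      now destruct (lt5_cases i Hi) as [->|[->|[->|[->| ->]]]].
  - intros [Hd Hc]. split.
    + intros t Ht HT.
      exact (conj (Hd 0%nat t ltac:(lia) Ht HT) (conj (Hd 1%nat t ltac:(lia) Ht HT)
        (conj (Hd 2%nat t ltac:(lia) Ht HT) (conj (Hd 3%nat t ltac:(lia) Ht HT)
        (Hd 4%nat t ltac:(lia) Ht HT))))).
    + exact (conj (Hc 0%nat ltac:(lia)) (conj (Hc 1%nat ltac:(lia))
        (conj (Hc 2%nat ltac:(lia)) (conj (Hc 3%nat ltac:(lia)) (Hc 4%nat ltac:(lia)))))).
Qed.

Lemma is_solution_on_ext F G x T :
  (forall t, 0 < t -> Rbar_lt t T -> F (x t) = G (x t)) ->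
  is_solution_on F x T -> is_solution_on G x T.
Proof.
  intros HFG Hx. apply is_solution_on_coord in Hx as [Hd Hc].
  apply is_solution_on_coord. split; [|exact Hc].
  intros i t Hi Ht HT. rewrite <- HFG by auto. now apply Hd.
Qed.

Lemma is_derive_affine (f : R -> R) a b t d :
  is_derive f t d -> is_derive (fun s => a + b * f s) t (b * d).
Proof.
  intros H.
  pose proof (is_derive_plus (fun _ => a) (fun s => b * f s) t zero (b * d)
    (is_derive_const a t) (is_derive_scal f t b d H)) as Hsum.
  unfold plus, zero in Hsum; simpl in Hsum. now rewrite Rplus_0_l in Hsum.
Qed.

Definition affine (a b X : state) : state :=
  state_of (fun i => coord i a + coord i b * coord i X).

Lemma is_solution_on_affine (F G : state -> state) a b y T :
  (forall i Y, (i < 5)%nat -> coord i (F (affine a b Y)) = coord i b * coord i (G Y)) ->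
  is_solution_on G y T -> is_solution_on F (fun s => affine a b (y s)) T.
Proof.
  intros HFG Hy. apply is_solution_on_coord in Hy as [Hd Hc].
  apply is_solution_on_coord. split.
  - intros i t Hi Ht HT. rewrite HFG by exact Hi.
    apply (is_derive_ext (fun s => coord i a + coord i b * coord i (y s))).
    { intros s. unfold affine. now rewrite coord_state_of. }
    apply is_derive_affine. now apply Hd.
  - intros i Hi.
    replace (coord i (affine a b (y 0))) with (coord i a + coord i b * coord i (y 0))
      by (unfold affine; now rewrite coord_state_of).
    apply (filterlim_ext (fun s => coord i a + coord i b * coord i (y s))).
    { intros s. unfold affine. now rewrite coord_state_of. }
    apply (filterlim_Rplus_fun (at_right 0)); [apply filterlim_const|].
    apply (filterlim_Rmult_fun (at_right 0)); [apply filterlim_const|now apply Hc].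
Qed.

Definition inv_state (P : state) : state :=
  mkState (/ sS P) (/ sE P) (/ sI P) (/ sR P) (/ sV P).

(* Relative deviation [(X - P) / P], componentwise. *)
Definition rel_coords (P X : state) : state :=
  affine (mkState (-1) (-1) (-1) (-1) (-1)) (inv_state P) X.

Section RelativeDeviation.

Variable P : state.
Hypothesis HP : forall i, (i < 5)%nat -> 0 < coord i P.

Lemma coords_neq0 : sS P <> 0 /\ sE P <> 0 /\ sI P <> 0 /\ sR P <> 0 /\ sV P <> 0.
Proof.
  pose proof (HP 0%nat ltac:(lia)). pose proof (HP 1%nat ltac:(lia)). pose proof (HP 2%nat ltac:(lia)).
  pose proof (HP 3%nat ltac:(lia)). pose proof (HP 4%nat ltac:(lia)). simpl in *. repeat split; lra.
Qed.

Lemma affine_rel_coords X : affine P P (rel_coords P X) = X.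
Proof.
  destruct coords_neq0 as (? & ? & ? & ? & ?).
  unfold rel_coords, affine, state_of; simpl. destruct X; f_equal; simpl; field; assumption.
Qed.

Lemma rel_coords_hadamard X : rel_coords P X = hadamard (inv_state P) (sub_state X P).
Proof.
  destruct coords_neq0 as (? & ? & ? & ? & ?).
  unfold rel_coords, affine, state_of, hadamard, sub_state; simpl. f_equal; field; assumption.
Qed.

Lemma sub_state_hadamard X : sub_state X P = hadamard P (rel_coords P X).
Proof.
  destruct coords_neq0 as (? & ? & ? & ? & ?).
  unfold rel_coords, affine, state_of, hadamard, sub_state; simpl. f_equal; field; assumption.
Qed.

Lemma is_solution_on_rel_coords (F G : state -> state) x T :
  (forall i Y, (i < 5)%nat -> coord i (F (affine P P Y)) = coord i P * coord i (G Y)) ->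
  is_solution_on F x T -> is_solution_on G (fun s => rel_coords P (x s)) T.
Proof.
  intros HFG. apply is_solution_on_affine. intros i Y Hi.
  change (affine _ (inv_state P) Y) with (rel_coords P Y).
  rewrite <- (affine_rel_coords Y) at 2. rewrite HFG by exact Hi.
  pose proof (HP i Hi).
  replace (coord i (inv_state P)) with (/ coord i P)
    by (destruct (lt5_cases i Hi) as [->|[->|[->|[->| ->]]]]; reflexivity).
  field. lra.
Qed.

End RelativeDeviation.

(** * Global solutions by Picard iteration *)

Lemma continuous_of_lipschitz (g : R -> R) C x : 0 <= C ->
  (forall u v, Rabs (g u - g v) <= C * Rabs (u - v)) -> continuous g x.
Proof.
  intros HC Hg. apply (proj2 (filterlim_locally g (g x))). intros [e He].
  assert (Hp : 0 < e / (C + 1)) by (apply Rdiv_lt_0_compat; lra).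
  exists (mkposreal _ Hp). intros y Hy. change (Rabs (y - x) < e / (C + 1)) in Hy.
  change (Rabs (g y - g x) < e). eapply Rle_lt_trans; [apply Hg|].
  assert (Rabs (y - x) * (C + 1) < e).
  { replace e with (e / (C + 1) * (C + 1)) by (field; lra). apply Rmult_lt_compat_r; lra. }
  pose proof (Rabs_pos (y - x)). nra.
Qed.

Lemma ex_RInt_of_continuous (g : R -> R) a b : (forall x, continuous g x) -> ex_RInt g a b.
Proof. intros H. apply (ex_RInt_continuous (V := R_CompleteNormedModule)). intros; apply H. Qed.

Lemma RInt_minus_of_continuous (f g : R -> R) a b :
  (forall x, continuous f x) -> (forall x, continuous g x) ->
  RInt (fun s => f s - g s) a b = RInt f a b - RInt g a b.
Proof.
  intros Hf Hg. apply (RInt_minus (V := R_CompleteNormedModule)); now apply ex_RInt_of_continuous.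
Qed.

Lemma RInt_0_minus (g : R -> R) s t : (forall x, continuous g x) ->
  RInt g 0 t - RInt g 0 s = RInt g s t.
Proof.
  intros H. rewrite <- (RInt_Chasles g 0 s t) by (apply ex_RInt_of_continuous; auto).
  unfold plus; simpl. ring.
Qed.

Lemma abs_RInt_le_const_Rabs (g : R -> R) s t B : (forall x, continuous g x) ->
  (forall x, Rabs (g x) <= B) -> Rabs (RInt g s t) <= B * Rabs (t - s).
Proof.
  intros Hc Hb. destruct (Rle_dec s t) as [Hst|Hst].
  - rewrite (Rabs_right (t - s)), Rmult_comm by lra.
    apply abs_RInt_le_const; auto. now apply ex_RInt_of_continuous.
  - rewrite <- opp_RInt_swap by (now apply ex_RInt_of_continuous).
    unfold opp; simpl. rewrite Rabs_Ropp, (Rabs_left (t - s)) by lra.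
    replace (- (t - s)) with (s - t) by ring. rewrite Rmult_comm.
    apply abs_RInt_le_const; auto; [lra|]. now apply ex_RInt_of_continuous.
Qed.

Lemma abs_RInt_le_RInt (f g : R -> R) a b : a <= b -> ex_RInt f a b -> ex_RInt g a b ->
  (forall x, a < x < b -> Rabs (f x) <= g x) -> Rabs (RInt f a b) <= RInt g a b.
Proof.
  intros Hab Hf Hg H. apply Rabs_le. split.
  - assert (Ho : RInt (fun x => - g x) a b <= RInt f a b).
    { apply RInt_le; auto; [apply (ex_RInt_opp (V := R_NormedModule)); auto|].
      intros x Hx. specialize (H x Hx). pose proof (Rle_abs (- f x)).
      rewrite Rabs_Ropp in *. lra. }
    rewrite (RInt_opp (V := R_CompleteNormedModule)) in Ho by auto.
    unfold opp in Ho; simpl in Ho. lra.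
  - apply RInt_le; auto. intros x Hx. specialize (H x Hx). pose proof (Rle_abs (f x)). lra.
Qed.

Lemma RInt_scal_exp C a t : 0 < a -> RInt (fun s => C * exp (a * s)) 0 t = C * (exp (a * t) - 1) / a.
Proof.
  intros Ha. apply is_RInt_unique.
  replace (C * (exp (a * t) - 1) / a) with (minus (C * exp (a * t) / a) (C * exp (a * 0) / a)).
  2:{ unfold minus, plus, opp; simpl. rewrite Rmult_0_r, exp_0. field. lra. }
  apply (is_RInt_derive (fun s => C * exp (a * s) / a)).
  - intros x _. auto_derive; [exact I|]. field. lra.
  - intros x _. apply (ex_derive_continuous (V := R_NormedModule)). auto_derive. exact I.
Qed.

Lemma lim_seq_abs_minus_le (u v : nat -> R) (l1 l2 : R) n C :
  is_lim_seq u l1 -> is_lim_seq v l2 -> (forall m, (n <= m)%nat -> Rabs (u m - v m) <= C) ->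
  Rabs (l1 - l2) <= C.
Proof.
  intros Hu Hv H.
  apply (is_lim_seq_le_loc (fun m => Rabs (u m - v m)) (fun _ => C) (Rabs (l1 - l2)) C).
  - exists n. exact H.
  - apply (is_lim_seq_abs _ (l1 - l2)), is_lim_seq_minus'; assumption.
  - apply is_lim_seq_const.
Qed.

Lemma exists_geom_lt C eps : 0 < eps -> exists n, C / 2 ^ n < eps.
Proof.
  intros He. destruct (INR_archimed eps C He) as [n Hn]. exists n.
  assert (Hpow : INR n <= 2 ^ n).
  { clear. induction n as [|n IH]; [simpl; lra|]. rewrite S_INR; simpl.
    pose proof (pow_R1_Rle 2 n ltac:(lra)). lra. }
  pose proof (pow_lt 2 n ltac:(lra)).
  apply (Rmult_lt_reg_r (2 ^ n)); [lra|]. unfold Rdiv. rewrite Rmult_assoc, Rinv_l by lra. nra.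
Qed.

Lemma eq_0_of_le_geom D C : (forall n, Rabs D <= C / 2 ^ n) -> D = 0.
Proof.
  intros H. apply NNPP. intros Hne.
  destruct (exists_geom_lt C (Rabs D)) as [n Hn]; [now apply Rabs_pos_lt|].
  specialize (H n). lra.
Qed.

Section Picard.

Variables (F : state -> state) (B K : R) (X0 : state).
Hypotheses (HK : 0 < K)
  (HB : forall i X, Rabs (coord i (F X)) <= B)
  (HL : forall i X Y, Rabs (coord i (F X) - coord i (F Y)) <= K * dist1 X Y).

Lemma bound_nonneg : 0 <= B.
Proof. pose proof (HB 0%nat X0). pose proof (Rabs_pos (coord 0 (F X0))). lra. Qed.

Fixpoint picard (n : nat) : R -> state :=
  match n with
  | O => fun _ => X0
  | S n => fun t => state_of (fun i => coord i X0 + RInt (fun s => coord i (F (picard n s))) 0 t)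
  end.

Lemma coord_picard_S n i t : (i < 5)%nat ->
  coord i (picard (S n) t) = coord i X0 + RInt (fun s => coord i (F (picard n s))) 0 t.
Proof. intros Hi. simpl. now rewrite coord_state_of. Qed.

Lemma continuous_field_along (x : R -> state) i C : 0 <= C ->
  (forall j s t, (j < 5)%nat -> Rabs (coord j (x t) - coord j (x s)) <= C * Rabs (t - s)) ->
  forall y, continuous (fun s => coord i (F (x s))) y.
Proof.
  intros HC Hx y. apply (continuous_of_lipschitz _ (K * (5 * C))); [apply Rmult_le_pos; lra|].
  intros u v. eapply Rle_trans; [apply HL|]. rewrite Rmult_assoc.
  apply Rmult_le_compat_l; [lra|]. rewrite Rmult_assoc. apply dist1_le. intros j Hj. now apply Hx.
Qed.

Lemma picard_lipschitz n i s t : (i < 5)%nat ->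
  Rabs (coord i (picard n t) - coord i (picard n s)) <= B * Rabs (t - s).
Proof.
  pose proof bound_nonneg.
  revert i s t. induction n as [|n IH]; intros i s t Hi.
  - simpl. rewrite Rminus_diag, Rabs_R0. apply Rmult_le_pos; [lra|apply Rabs_pos].
  - rewrite !coord_picard_S by exact Hi.
    rewrite Rminus_plus_l_l.
    assert (Hc := continuous_field_along (picard n) i B bound_nonneg IH).
    rewrite RInt_0_minus by exact Hc. now apply abs_RInt_le_const_Rabs.
Qed.

Lemma continuous_field_picard n i y : continuous (fun s => coord i (F (picard n s))) y.
Proof. exact (continuous_field_along (picard n) i B bound_nonneg (picard_lipschitz n) y). Qed.

(* With [alpha = 10 K], each Picard step gains the factor [5 K / alpha = 1/2]. *)
Let alpha := 10 * K.
Let M := B / (2 * K).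

Lemma M_nonneg : 0 <= M.
Proof.
  pose proof bound_nonneg. unfold M. apply Rmult_le_pos; [lra|]. apply Rlt_le, Rinv_0_lt_compat; lra.
Qed.

Lemma picard_step_le n t : 0 <= t ->
  dist1 (picard (S n) t) (picard n t) <= M * exp (alpha * t) / 2 ^ n.
Proof.
  pose proof M_nonneg. pose proof bound_nonneg.
  revert t. induction n as [|n IH]; intros t Ht.
  - simpl pow. rewrite Rdiv_1_r. apply Rle_trans with (5 * (B * t)).
    + apply dist1_le. intros i Hi. rewrite coord_picard_S by exact Hi. simpl picard at 2.
      rewrite Rplus_minus_l.
      replace t with (Rabs (t - 0)) at 2 by (rewrite Rminus_0_r, Rabs_right; lra).
      apply abs_RInt_le_const_Rabs; auto. intros; apply continuous_const.
    + pose proof (exp_ineq1_le (alpha * t)). unfold M, alpha in *.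
      replace (5 * (B * t)) with (B / (2 * K) * (10 * K * t)) by (field; lra).
      apply Rmult_le_compat_l; lra.
  - pose proof (pow_lt 2 n ltac:(lra)).
    apply Rle_trans with (5 * (K * M / 2 ^ n * (exp (alpha * t) - 1) / alpha)).
    + apply dist1_le. intros i Hi. rewrite !coord_picard_S by exact Hi.
      rewrite <- RInt_scal_exp by (unfold alpha; lra).
      rewrite Rminus_plus_l_l.
      rewrite <- RInt_minus_of_continuous by apply continuous_field_picard.
      apply abs_RInt_le_RInt; [exact Ht| | |].
      * apply ex_RInt_of_continuous. intros y.
        apply (continuous_minus (fun s => coord i (F (picard (S n) s)))
          (fun s => coord i (F (picard n s)))); apply continuous_field_picard.
      * apply ex_RInt_of_continuous. intros y.
        apply (ex_derive_continuous (V := R_NormedModule)). auto_derive. exact I.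
      * intros s Hs. eapply Rle_trans; [apply HL|].
        replace (K * M / 2 ^ n * exp (alpha * s)) with (K * (M * exp (alpha * s) / 2 ^ n))
          by (field; lra).
        apply Rmult_le_compat_l; [lra|]. apply IH. lra.
    + simpl pow. unfold alpha.
      replace (5 * (K * M / 2 ^ n * (exp (10 * K * t) - 1) / (10 * K)))
        with (M * (exp (10 * K * t) - 1) / (2 * 2 ^ n)) by (field; lra).
      unfold Rdiv. apply Rmult_le_compat_r; [apply Rlt_le, Rinv_0_lt_compat; lra|].
      apply Rmult_le_compat_l; lra.
Qed.

Lemma picard_cauchy n m t i : 0 <= t -> (n <= m)%nat ->
  Rabs (coord i (picard m t) - coord i (picard n t)) <= 2 * M * exp (alpha * t) / 2 ^ n.
Proof.
  intros Ht Hnm. pose proof M_nonneg. pose proof (exp_pos (alpha * t)).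
  assert (Hsum : forall p, Rabs (coord i (picard (n + p) t) - coord i (picard n t))
                           <= 2 * M * exp (alpha * t) * (1 / 2 ^ n - 1 / 2 ^ (n + p))).
  { induction p as [|p IH].
    - rewrite Nat.add_0_r, !Rminus_diag, Rabs_R0, Rmult_0_r. lra.
    - replace (n + S p)%nat with (S (n + p)) by lia.
      pose proof (picard_step_le (n + p) t Ht).
      pose proof (coord_le_dist1 (picard (S (n + p)) t) (picard (n + p) t) i).
      pose proof (pow_lt 2 (n + p) ltac:(lra)). pose proof (pow_lt 2 n ltac:(lra)).
      replace (coord i (picard (S (n + p)) t) - coord i (picard n t))
        with ((coord i (picard (S (n + p)) t) - coord i (picard (n + p) t))
              + (coord i (picard (n + p) t) - coord i (picard n t))) by ring.
      eapply Rle_trans; [apply Rabs_triang|].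
      replace (2 * M * exp (alpha * t) * (1 / 2 ^ n - 1 / 2 ^ S (n + p))) with
        (M * exp (alpha * t) / 2 ^ (n + p) + 2 * M * exp (alpha * t) * (1 / 2 ^ n - 1 / 2 ^ (n + p)))
        by (simpl pow; field; lra).
      lra. }
  replace m with (n + (m - n))%nat by lia.
  eapply Rle_trans; [apply Hsum|].
  pose proof (pow_lt 2 (n + (m - n)) ltac:(lra)). pose proof (pow_lt 2 n ltac:(lra)).
  assert (0 < 1 / 2 ^ (n + (m - n))) by (apply Rdiv_lt_0_compat; lra).
  assert (0 <= 2 * M * exp (alpha * t)) by nra.
  unfold Rdiv at 3. rewrite <- (Rmult_1_l (/ 2 ^ n)). fold (1 / 2 ^ n). nra.
Qed.

Lemma picard_ex_lim t i : 0 <= t -> ex_finite_lim_seq (fun n => coord i (picard n t)).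
Proof.
  intros Ht. apply ex_lim_seq_cauchy_corr. intros eps.
  destruct (exists_geom_lt (4 * M * exp (alpha * t)) eps (cond_pos eps)) as [N HN].
  exists N. intros n m Hn Hm.
  pose proof (picard_cauchy N n t i Ht Hn). pose proof (picard_cauchy N m t i Ht Hm).
  replace (coord i (picard n t) - coord i (picard m t))
    with ((coord i (picard n t) - coord i (picard N t)) - (coord i (picard m t) - coord i (picard N t)))
    by ring.
  eapply Rle_lt_trans; [apply Rabs_triang|]. rewrite Rabs_Ropp.
  replace (4 * M * exp (alpha * t) / 2 ^ N) with (2 * (2 * M * exp (alpha * t) / 2 ^ N)) in HN
    by (unfold Rdiv; ring).
  lra.
Qed.

(* Frozen at [t = 0] for negative times, so that the limit is Lipschitz on all of [R]. *)
Definition picard_lim (t : R) : state :=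
  state_of (fun i => Lim_seq (fun n => coord i (picard n (Rmax 0 t)))).

Lemma picard_lim_at_max t i : (i < 5)%nat -> coord i (picard_lim t) = coord i (picard_lim (Rmax 0 t)).
Proof.
  intros Hi. unfold picard_lim. rewrite !coord_state_of by exact Hi.
  now rewrite (Rmax_right 0 (Rmax 0 t)) by apply Rmax_l.
Qed.

Lemma is_lim_seq_picard t i : 0 <= t -> (i < 5)%nat ->
  is_lim_seq (fun n => coord i (picard n t)) (coord i (picard_lim t)).
Proof.
  intros Ht Hi. unfold picard_lim. rewrite coord_state_of, Rmax_right by assumption.
  now apply Lim_seq_correct', picard_ex_lim.
Qed.

Lemma picard_lim_dist n t i : 0 <= t -> (i < 5)%nat ->
  Rabs (coord i (picard_lim t) - coord i (picard n t)) <= 2 * M * exp (alpha * t) / 2 ^ n.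
Proof.
  intros Ht Hi.
  apply (lim_seq_abs_minus_le (fun m => coord i (picard m t)) (fun _ => coord i (picard n t)) _ _ n).
  - now apply is_lim_seq_picard.
  - apply is_lim_seq_const.
  - intros m Hm. now apply picard_cauchy.
Qed.

Lemma picard_lim_lipschitz i s t : (i < 5)%nat ->
  Rabs (coord i (picard_lim t) - coord i (picard_lim s)) <= B * Rabs (t - s).
Proof.
  intros Hi. rewrite (picard_lim_at_max t), (picard_lim_at_max s) by exact Hi.
  apply (lim_seq_abs_minus_le (fun m => coord i (picard m (Rmax 0 t)))
                              (fun m => coord i (picard m (Rmax 0 s))) _ _ 0).
  - apply is_lim_seq_picard; [apply Rmax_l|exact Hi].
  - apply is_lim_seq_picard; [apply Rmax_l|exact Hi].
  - intros m _. eapply Rle_trans; [now apply picard_lipschitz|].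
    apply Rmult_le_compat_l; [apply bound_nonneg|].
    unfold Rmax. destruct (Rle_dec 0 t), (Rle_dec 0 s); apply Rabs_le; split;
      try (apply Rabs_le_between'; lra);
      try (pose proof (Rle_abs (t - s)); pose proof (Rle_abs (- (t - s)));
           rewrite Rabs_Ropp in *; lra).
Qed.

Lemma continuous_field_picard_lim i y : continuous (fun s => coord i (F (picard_lim s))) y.
Proof.
  apply (continuous_field_along picard_lim i B bound_nonneg). intros; now apply picard_lim_lipschitz.
Qed.

Lemma picard_lim_integral t i : 0 <= t -> (i < 5)%nat ->
  coord i (picard_lim t) = coord i X0 + RInt (fun s => coord i (F (picard_lim s))) 0 t.
Proof.
  intros Ht Hi. apply Rminus_diag_uniq.
  pose proof M_nonneg. pose proof (exp_pos (alpha * t)).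
  set (C := 2 * M * exp (alpha * t)).
  apply (eq_0_of_le_geom _ (C + t * (K * (5 * C)))). intros n.
  pose proof (pow_lt 2 n ltac:(lra)).
  set (gn := fun s => coord i (F (picard n s))). set (g := fun s => coord i (F (picard_lim s))).
  assert (Hstep : Rabs (coord i (picard_lim t) - (coord i X0 + RInt gn 0 t)) <= C / 2 ^ n).
  { unfold gn. rewrite <- coord_picard_S by exact Hi.
    eapply Rle_trans; [now apply picard_lim_dist|].
    unfold C. simpl pow. unfold Rdiv. apply Rmult_le_compat_l; [nra|].
    rewrite Rinv_mult. assert (0 < / 2 ^ n) by (apply Rinv_0_lt_compat; lra). nra. }
  assert (Hint : Rabs (RInt gn 0 t - RInt g 0 t) <= t * (K * (5 * C) / 2 ^ n)).
  { rewrite <- RInt_minus_of_continuous by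
      (intros; first [apply continuous_field_picard|apply continuous_field_picard_lim]).
    replace t with (t - 0) at 2 by ring.
    apply abs_RInt_le_const; [exact Ht| |].
    - apply ex_RInt_of_continuous. intros y.
      apply (continuous_minus gn g); [apply continuous_field_picard|apply continuous_field_picard_lim].
    - intros s Hs. unfold gn, g. rewrite <- Rabs_Ropp, Ropp_minus_distr.
      eapply Rle_trans; [apply HL|].
      unfold Rdiv. rewrite !Rmult_assoc. apply Rmult_le_compat_l; [lra|].
      apply dist1_le. intros j Hj. eapply Rle_trans; [apply picard_lim_dist; auto; lra|].
      assert (exp (alpha * s) <= exp (alpha * t)).
      { destruct (Req_dec s t) as [->|]; [lra|].
        apply Rlt_le, exp_increasing. unfold alpha. apply Rmult_lt_compat_l; lra. }
      assert (0 < / 2 ^ n) by (apply Rinv_0_lt_compat; lra).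
      unfold C, Rdiv. assert (0 <= M * / 2 ^ n) by nra. nra. }
  replace (coord i (picard_lim t) - (coord i X0 + RInt g 0 t))
    with ((coord i (picard_lim t) - (coord i X0 + RInt gn 0 t)) + (RInt gn 0 t - RInt g 0 t)) by ring.
  eapply Rle_trans; [apply Rabs_triang|].
  replace ((C + t * (K * (5 * C))) / 2 ^ n) with (C / 2 ^ n + t * (K * (5 * C) / 2 ^ n))
    by (field; lra).
  lra.
Qed.

End Picard.

Theorem bounded_lipschitz_global_solution (F : state -> state) B K : 0 < K ->
  (forall i X, Rabs (coord i (F X)) <= B) ->
  (forall i X Y, Rabs (coord i (F X) - coord i (F Y)) <= K * dist1 X Y) ->
  forall X0, exists x, is_solution_on F x p_infty /\ x 0 = X0.
Proof.
  intros HK HB HL X0. exists (picard_lim F X0). split.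
  - apply is_solution_on_coord. split.
    + intros i t Hi Ht _.
      set (g := fun s => coord i (F (picard_lim F X0 s))).
      assert (Hg : forall y, continuous g y) by (intros; now apply (continuous_field_picard_lim F B K)).
      apply (is_derive_ext_loc (fun b => coord i X0 + RInt g 0 b)).
      { exists (mkposreal t Ht). intros y Hy. change (Rabs (y - t) < t) in Hy.
        symmetry. apply (picard_lim_integral F B K); auto. apply Rabs_def2 in Hy. lra. }
      apply (is_derive_ext (fun b => coord i X0 + 1 * RInt g 0 b)).
      { intros b. now rewrite Rmult_1_l. }
      rewrite <- (Rmult_1_l (coord i (F (picard_lim F X0 t)))). apply is_derive_affine.
      apply (is_derive_RInt g (fun b => RInt g 0 b) 0 t); [|apply Hg].
      exists (mkposreal 1 Rlt_0_1). intros y _.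
      apply (RInt_correct (V := R_CompleteNormedModule)). now apply ex_RInt_of_continuous.
    + intros i Hi. apply filterlim_at_right_of_continuous.
      apply (continuous_of_lipschitz (fun s => coord i (picard_lim F X0 s)) B).
      * now apply (bound_nonneg F B X0 HB).
      * intros u v. now apply (picard_lim_lipschitz F B K).
  - apply state_eq. intros i Hi. rewrite (picard_lim_integral F B K) by (auto; lra).
    rewrite RInt_point. unfold zero; simpl. ring.
Qed.

(** * The system in relative coordinates *)

Definition clamp (r v : R) : R := Rmax (- r) (Rmin r v).

Definition clamp_state (r : R) (Y : state) : state :=
  mkState (clamp r (sS Y)) (clamp r (sE Y)) (clamp r (sI Y)) (clamp r (sR Y)) (clamp r (sV Y)).

Lemma abs_clamp_le r v : 0 <= r -> Rabs (clamp r v) <= r.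
Proof.
  intros Hr. unfold clamp. apply Rabs_le. split; [apply Rmax_l|]. apply Rmax_lub; [lra|apply Rmin_l].
Qed.

Lemma clamp_lipschitz r v w : 0 <= r -> Rabs (clamp r v - clamp r w) <= Rabs (v - w).
Proof.
  intros Hr. unfold clamp, Rmax, Rmin.
  pose proof (Rle_abs (v - w)). pose proof (Rle_abs (- (v - w))). rewrite Rabs_Ropp in *.
  destruct (Rle_dec r v), (Rle_dec r w), (Rle_dec (- r) r), (Rle_dec (- r) v), (Rle_dec (- r) w);
    try lra; apply Rabs_le; lra.
Qed.

Lemma clamp_id r v : Rabs v <= r -> clamp r v = v.
Proof.
  intros H. pose proof (Rle_abs v). pose proof (Rle_abs (- v)). rewrite Rabs_Ropp in *.
  unfold clamp. now rewrite Rmin_right, Rmax_right by lra.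
Qed.

Lemma clamp_state_id r Y : (forall i, (i < 5)%nat -> Rabs (coord i Y) <= r) -> clamp_state r Y = Y.
Proof.
  intros H. destruct Y as [x y z u v]. unfold clamp_state; simpl.
  rewrite (clamp_id r x (H 0%nat ltac:(lia))), (clamp_id r y (H 1%nat ltac:(lia))),
    (clamp_id r z (H 2%nat ltac:(lia))), (clamp_id r u (H 3%nat ltac:(lia))),
    (clamp_id r v (H 4%nat ltac:(lia))).
  reflexivity.
Qed.

Section RelativeCoordinates.

Variables (m a b c mu : R).
Hypotheses (Hm : 0 < m) (Ha : 0 < a) (Hb : 0 < b) (Hc : 0 < c) (Hmu : 0 < mu).

Definition rel_lin (Y : state) : state :=
  let x := sS Y in let y := sE Y in let z := sI Y in let u := sR Y in let v := sV Y in
  mkState (- (m + a) * x - m * z) (b * (x + z - y)) (c * (y - z)) (mu * (z - u)) (mu * (x - v)).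

Definition rel_field (Y : state) : state :=
  let x := sS Y in let y := sE Y in let z := sI Y in let u := sR Y in let v := sV Y in
  mkState (- (m + a) * x - m * z - m * x * z) (b * (x + z + x * z - y)) (c * (y - z))
          (mu * (z - u)) (mu * (x - v)).

(* [lyap_cross] is small enough for the AM-GM absorptions in [lyap_deriv_lin_le_square];
   [lyap_slab] makes the cubic remainder at most half of the linear decay. *)
Definition lyap_cross : R :=
  m / (4 * (c / 2 + (m + a) ^ 2 / (2 * m) + c ^ 2 / (2 * m) + m / 4 + m + c)).
Definition lyap_tail : R := lyap_cross * m / (2 * mu).
Definition lyap_decay : R := lyap_cross * m / 16.
Definition lyap_slab : R := lyap_cross / 64.

Definition lyap (Y : state) : R :=
  let x := sS Y in let y := sE Y in let z := sI Y in let u := sR Y in let v := sV Y in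
  x * x / 2 + m / b * (y * y) / 2 + m / c * (z * z) / 2 + lyap_cross * (x * z)
  + lyap_tail * (u * u + v * v) / 2.

Definition lyap_deriv (Y D : state) : R :=
  sS Y * sS D + m / b * (sE Y * sE D) + m / c * (sI Y * sI D)
  + lyap_cross * (sS D * sI Y + sS Y * sI D) + lyap_tail * (sR Y * sR D + sV Y * sV D).

Definition lyap_lo : R := 1 / (4 * (1 + b / m + c / m + 1 / lyap_tail)).
Definition lyap_hi : R := 1 + m / b + m / c + lyap_tail.

Lemma lyap_cross_facts : 0 < lyap_cross /\ lyap_cross <= 1 / 4 /\ lyap_cross * c <= m / 4 /\
  lyap_cross * (c / 2 + (m + a) ^ 2 / (2 * m) + c ^ 2 / (2 * m) + m / 4) <= m / 4.
Proof.
  set (Kc := c / 2 + (m + a) ^ 2 / (2 * m) + c ^ 2 / (2 * m) + m / 4).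
  assert (HK : 0 < Kc).
  { unfold Kc. assert (0 < (m + a) ^ 2 / (2 * m)) by (apply Rdiv_lt_0_compat; nra).
    assert (0 < c ^ 2 / (2 * m)) by (apply Rdiv_lt_0_compat; nra). lra. }
  assert (Hpos : 0 < lyap_cross) by (unfold lyap_cross; fold Kc; apply Rdiv_lt_0_compat; lra).
  assert (E : lyap_cross * (4 * (Kc + m + c)) = m) by (unfold lyap_cross; fold Kc; field; lra).
  repeat split; nra.
Qed.

Lemma lyap_tail_pos : 0 < lyap_tail.
Proof. destruct lyap_cross_facts as [H _]. unfold lyap_tail. apply Rdiv_lt_0_compat; nra. Qed.

Lemma lyap_decay_pos : 0 < lyap_decay.
Proof. destruct lyap_cross_facts as [H _]. unfold lyap_decay. nra. Qed.

Lemma lyap_slab_pos : 0 < lyap_slab.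
Proof. destruct lyap_cross_facts as [H _]. unfold lyap_slab. lra. Qed.

Lemma lyap_slab_le_1 : lyap_slab <= 1.
Proof. destruct lyap_cross_facts as [_ [H _]]. unfold lyap_slab. lra. Qed.

Lemma lyap_deriv_rel_field Y :
  lyap_deriv Y (rel_field Y) = lyap_deriv Y (rel_lin Y)
    + m * sS Y * sI Y * (sE Y - sS Y - lyap_cross * sI Y).
Proof. unfold lyap_deriv, rel_field, rel_lin; simpl. field. lra. Qed.

(* Complete the square in [y]; the contributions of the cross term are absorbed by AM-GM. *)
Lemma lyap_deriv_lin_le_square Y : let w := sE Y - sS Y / 2 - sI Y in
  lyap_deriv Y (rel_lin Y) <= - (m / 2) * (sS Y * sS Y) - m / 2 * (w * w)
    - lyap_cross * m / 4 * (sI Y * sI Y + sR Y * sR Y + sV Y * sV Y).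
Proof.
  destruct Y as [x y z u v]. unfold lyap_deriv, rel_lin; simpl.
  destruct lyap_cross_facts as (He & He1 & Hec & HeK). set (e := lyap_cross) in *.
  set (w := y - x / 2 - z).
  assert (Hsplit : x * (- (m + a) * x - m * z) + m / b * (y * (b * (x + z - y)))
     + m / c * (z * (c * (y - z))) + e * ((- (m + a) * x - m * z) * z + x * (c * (y - z)))
     + lyap_tail * (u * (mu * (z - u)) + v * (mu * (x - v)))
     = - a * (x * x) - m * (w * w + 3 / 4 * (x * x)) - e * m * (z * z) - e * (m + a) * (x * z)
       + e * c * (x * w) + e * c * (x * x) / 2 + e * m / 2 * (z * u - u * u + x * v - v * v)).
  { unfold w, lyap_tail. fold e. field. repeat split; lra. }
  rewrite Hsplit.
  assert (Hxz : - e * (m + a) * (x * z)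
                <= e * m / 2 * (z * z) + e * ((m + a) ^ 2 / (2 * m)) * (x * x)).
  { assert (0 <= e / (2 * m) * ((m * z + (m + a) * x) * (m * z + (m + a) * x))).
    { apply Rmult_le_pos; [apply Rlt_le, Rdiv_lt_0_compat; lra|apply Rle_0_sqr]. }
    assert (e / (2 * m) * ((m * z + (m + a) * x) * (m * z + (m + a) * x))
            = e * m / 2 * (z * z) + e * ((m + a) ^ 2 / (2 * m)) * (x * x) + e * (m + a) * (x * z))
      by (field; lra).
    lra. }
  assert (Hxw : e * c * (x * w) <= m / 2 * (w * w) + e * (e * (c ^ 2 / (2 * m))) * (x * x)).
  { assert (0 <= / (2 * m) * ((m * w - e * c * x) * (m * w - e * c * x))).
    { apply Rmult_le_pos; [apply Rlt_le, Rinv_0_lt_compat; lra|apply Rle_0_sqr]. }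
    assert (/ (2 * m) * ((m * w - e * c * x) * (m * w - e * c * x))
            = m / 2 * (w * w) + e * (e * (c ^ 2 / (2 * m))) * (x * x) - e * c * (x * w))
      by (field; lra).
    lra. }
  assert (Hzu : z * u <= (z * z + u * u) / 2)
    by (pose proof (Rle_0_sqr (z - u)); unfold Rsqr in *; lra).
  assert (Hxv : x * v <= (x * x + v * v) / 2)
    by (pose proof (Rle_0_sqr (x - v)); unfold Rsqr in *; lra).
  assert (Hc2 : e * (c ^ 2 / (2 * m)) <= c ^ 2 / (2 * m)).
  { assert (0 < c ^ 2 / (2 * m)) by (apply Rdiv_lt_0_compat; nra). nra. }
  assert (HK : e * (c / 2 + (m + a) ^ 2 / (2 * m) + e * (c ^ 2 / (2 * m)) + m / 4) <= m / 4) by nra.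
  assert (e * m / 2 * (z * u - u * u + x * v - v * v)
          <= e * m / 2 * ((z * z + u * u) / 2 - u * u + (x * x + v * v) / 2 - v * v))
    by (apply Rmult_le_compat_l; nra).
  assert (0 <= x * x) by nra.
  nra.
Qed.

Lemma lyap_deriv_lin_le Y : lyap_deriv Y (rel_lin Y) <= - lyap_decay * sqnorm Y.
Proof.
  pose proof (lyap_deriv_lin_le_square Y) as Hw. simpl in Hw.
  destruct Y as [x y z u v]. unfold sqnorm, lyap_decay; simpl in *.
  destruct lyap_cross_facts as (He & He1 & _ & _). set (e := lyap_cross) in *.
  set (w := y - x / 2 - z) in *.
  assert (Hy : y * y <= 3 * (w * w + z * z + x * x)).
  { replace y with (w + z + x / 2) by (unfold w; ring).
    pose proof (Rle_0_sqr (w - z)). pose proof (Rle_0_sqr (w - x / 2)).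
    pose proof (Rle_0_sqr (z - x / 2)). unfold Rsqr in *. nra. }
  assert (Hem : 0 <= e * m) by nra.
  assert (0 <= (1 / 4 - e) * m * (x * x)) by (apply Rmult_le_pos; nra).
  assert (0 <= (1 / 4 - e) * m * (w * w)) by (apply Rmult_le_pos; nra).
  assert (e * m / 16 * (y * y) <= e * m / 16 * (3 * (w * w + z * z + x * x)))
    by (apply Rmult_le_compat_l; lra).
  assert (0 <= e * m * (u * u)) by (apply Rmult_le_pos; nra).
  assert (0 <= e * m * (v * v)) by (apply Rmult_le_pos; nra).
  assert (0 <= e * m * (z * z)) by (apply Rmult_le_pos; nra).
  assert (0 <= m * (x * x)) by (apply Rmult_le_pos; nra).
  assert (0 <= m * (w * w)) by (apply Rmult_le_pos; nra).
  lra.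
Qed.

Lemma cubic_term_le Y :
  Rabs (sI Y * (sE Y - sS Y - lyap_cross * sI Y)) <= 2 * sqnorm Y.
Proof.
  destruct Y as [x y z u v]. unfold sqnorm; simpl.
  destruct lyap_cross_facts as (He & He1 & _ & _). set (e := lyap_cross) in *.
  pose proof (Rle_0_sqr (z - y)). pose proof (Rle_0_sqr (z + y)).
  pose proof (Rle_0_sqr (z - x)). pose proof (Rle_0_sqr (z + x)).
  pose proof (Rle_0_sqr u). pose proof (Rle_0_sqr v). pose proof (Rle_0_sqr z).
  unfold Rsqr in *.
  assert (0 <= e * (z * z) <= 1 / 4 * (z * z)) by (split; [apply Rmult_le_pos|apply Rmult_le_compat_r]; lra).
  apply Rabs_le. split; nra.
Qed.

Lemma lyap_deriv_le Y : Rabs (sS Y) <= lyap_slab ->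
  lyap_deriv Y (rel_field Y) <= - (lyap_decay / 2) * sqnorm Y.
Proof.
  intros Hx. rewrite lyap_deriv_rel_field.
  pose proof (lyap_deriv_lin_le Y). pose proof (cubic_term_le Y). pose proof (sqnorm_nonneg Y).
  assert (Hcub : m * sS Y * sI Y * (sE Y - sS Y - lyap_cross * sI Y)
                 <= m * lyap_slab * (2 * sqnorm Y)).
  { replace (m * sS Y * sI Y * (sE Y - sS Y - lyap_cross * sI Y))
      with (m * (sS Y * (sI Y * (sE Y - sS Y - lyap_cross * sI Y)))) by ring.
    eapply Rle_trans; [apply Rle_abs|]. rewrite 2!Rabs_mult, (Rabs_right m) by lra.
    rewrite Rmult_assoc. apply Rmult_le_compat_l; [lra|].
    apply Rmult_le_compat; auto using Rabs_pos. }
  unfold lyap_slab, lyap_decay in *. lra.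
Qed.

Lemma cross_term_le x z : Rabs (lyap_cross * (x * z)) <= x * x / 8 + m / c * (z * z) / 8.
Proof.
  destruct lyap_cross_facts as (He & He1 & Hec & _).
  assert (Hxz : Rabs (x * z) <= (x * x + z * z) / 2).
  { pose proof (Rle_0_sqr (x - z)). pose proof (Rle_0_sqr (x + z)). unfold Rsqr in *.
    apply Rabs_le; split; lra. }
  rewrite Rabs_mult, (Rabs_right lyap_cross) by lra.
  apply Rle_trans with (lyap_cross * ((x * x + z * z) / 2)); [apply Rmult_le_compat_l; lra|].
  assert (Hmc : lyap_cross <= m / c / 4).
  { apply (Rmult_le_reg_r c); [lra|]. replace (m / c / 4 * c) with (m / 4) by (field; lra). lra. }
  pose proof (Rle_0_sqr x). pose proof (Rle_0_sqr z). unfold Rsqr in *.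
  assert (lyap_cross * (x * x) <= 1 / 4 * (x * x)) by (apply Rmult_le_compat_r; lra).
  assert (lyap_cross * (z * z) <= m / c / 4 * (z * z)) by (apply Rmult_le_compat_r; lra).
  lra.
Qed.

Lemma lyap_lo_pos : 0 < lyap_lo.
Proof.
  pose proof lyap_tail_pos. unfold lyap_lo.
  assert (0 < b / m) by (apply Rdiv_lt_0_compat; lra). assert (0 < c / m) by (apply Rdiv_lt_0_compat; lra).
  assert (0 < 1 / lyap_tail) by (apply Rdiv_lt_0_compat; lra). apply Rdiv_lt_0_compat; lra.
Qed.

Lemma lyap_hi_pos : 0 < lyap_hi.
Proof.
  pose proof lyap_tail_pos. unfold lyap_hi.
  assert (0 < m / b) by (apply Rdiv_lt_0_compat; lra). assert (0 < m / c) by (apply Rdiv_lt_0_compat; lra).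
  lra.
Qed.

Lemma lyap_ge Y : lyap_lo * sqnorm Y <= lyap Y.
Proof.
  destruct Y as [x y z u v]. unfold lyap, sqnorm; simpl.
  pose proof lyap_tail_pos as Hd. set (D := 1 + b / m + c / m + 1 / lyap_tail).
  assert (Hinv : forall q, 0 < q -> 1 / q <= D -> lyap_lo <= q / 4).
  { intros q Hq HD. unfold lyap_lo. fold D.
    assert (0 < 1 / q) by (apply Rdiv_lt_0_compat; lra).
    replace (q / 4) with (1 / (4 * (1 / q))) by (field; lra).
    unfold Rdiv. rewrite !Rmult_1_l. apply Rinv_le_contravar; lra. }
  assert (0 < b / m) by (apply Rdiv_lt_0_compat; lra). assert (0 < c / m) by (apply Rdiv_lt_0_compat; lra).
  assert (0 < 1 / lyap_tail) by (apply Rdiv_lt_0_compat; lra).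
  assert (L1 : lyap_lo <= 1 / 4).
  { apply (Hinv 1); [lra|]. unfold D; lra. }
  assert (L2 : lyap_lo <= m / b / 4).
  { apply Hinv; [apply Rdiv_lt_0_compat; lra|]. replace (1 / (m / b)) with (b / m) by (field; lra).
    unfold D; lra. }
  assert (L3 : lyap_lo <= m / c / 4).
  { apply Hinv; [apply Rdiv_lt_0_compat; lra|]. replace (1 / (m / c)) with (c / m) by (field; lra).
    unfold D; lra. }
  assert (L4 : lyap_lo <= lyap_tail / 4) by (apply Hinv; [lra|unfold D; lra]).
  pose proof (cross_term_le x z) as Hxz. pose proof (Rle_abs (- (lyap_cross * (x * z)))) as Hxz'.
  rewrite Rabs_Ropp in Hxz'.
  pose proof (Rle_0_sqr x). pose proof (Rle_0_sqr y). pose proof (Rle_0_sqr z).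
  pose proof (Rle_0_sqr u). pose proof (Rle_0_sqr v). unfold Rsqr in *.
  assert (0 <= (1 / 4 - lyap_lo) * (x * x)) by (apply Rmult_le_pos; lra).
  assert (0 <= (m / b / 4 - lyap_lo) * (y * y)) by (apply Rmult_le_pos; lra).
  assert (0 <= (m / c / 4 - lyap_lo) * (z * z)) by (apply Rmult_le_pos; lra).
  assert (0 <= (lyap_tail / 4 - lyap_lo) * (u * u + v * v)) by (apply Rmult_le_pos; lra).
  assert (0 <= m / b * (y * y)) by (apply Rmult_le_pos; [apply Rlt_le, Rdiv_lt_0_compat|]; lra).
  assert (0 <= m / c * (z * z)) by (apply Rmult_le_pos; [apply Rlt_le, Rdiv_lt_0_compat|]; lra).
  assert (0 <= lyap_tail * (u * u + v * v)) by (apply Rmult_le_pos; lra).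
  lra.
Qed.

Lemma lyap_le Y : lyap Y <= lyap_hi * sqnorm Y.
Proof.
  destruct Y as [x y z u v]. unfold lyap, sqnorm, lyap_hi; simpl.
  pose proof lyap_tail_pos.
  pose proof (cross_term_le x z). pose proof (Rle_abs (lyap_cross * (x * z))).
  assert (0 <= m / b) by (apply Rlt_le, Rdiv_lt_0_compat; lra).
  assert (0 <= m / c) by (apply Rlt_le, Rdiv_lt_0_compat; lra).
  pose proof (Rle_0_sqr x). pose proof (Rle_0_sqr y). pose proof (Rle_0_sqr z).
  pose proof (Rle_0_sqr u). pose proof (Rle_0_sqr v). unfold Rsqr in *.
  assert (0 <= m / b * (x * x + z * z + u * u + v * v)) by (apply Rmult_le_pos; lra).
  assert (0 <= m / c * (x * x + y * y + u * u + v * v)) by (apply Rmult_le_pos; lra).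
  assert (0 <= lyap_tail * (x * x + y * y + z * z)) by (apply Rmult_le_pos; lra).
  assert (0 <= m / b * (y * y)) by (apply Rmult_le_pos; lra).
  assert (0 <= m / c * (z * z)) by (apply Rmult_le_pos; lra).
  assert (0 <= lyap_tail * (u * u + v * v)) by (apply Rmult_le_pos; lra).
  lra.
Qed.

Definition lyap_level : R := lyap_lo * (lyap_slab * lyap_slab).

Lemma lyap_level_pos : 0 < lyap_level.
Proof.
  pose proof lyap_lo_pos. pose proof lyap_slab_pos.
  unfold lyap_level. apply Rmult_lt_0_compat; [|apply Rmult_lt_0_compat]; assumption.
Qed.

Lemma coord_le_slab Y i : lyap Y < lyap_level -> (i < 5)%nat -> Rabs (coord i Y) <= lyap_slab.
Proof.
  intros HY Hi. pose proof (lyap_ge Y). pose proof lyap_lo_pos. pose proof lyap_slab_pos.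
  assert (Hn : sqnorm Y < lyap_slab * lyap_slab).
  { apply (Rmult_lt_reg_l lyap_lo); [lra|]. unfold lyap_level in HY. lra. }
  assert (Hi2 : coord i Y * coord i Y < lyap_slab * lyap_slab).
  { destruct Y as [x y z u v]. unfold sqnorm in Hn; simpl in Hn.
    pose proof (Rle_0_sqr x). pose proof (Rle_0_sqr y). pose proof (Rle_0_sqr z).
    pose proof (Rle_0_sqr u). pose proof (Rle_0_sqr v). unfold Rsqr in *.
    destruct (lt5_cases i Hi) as [->|[->|[->|[->| ->]]]]; simpl; lra. }
  apply Rlt_le. rewrite <- (Rabs_right lyap_slab) by lra. apply Rsqr_lt_abs_0. exact Hi2.
Qed.

Lemma is_derive_lyap_coords (f1 f2 f3 f4 f5 : R -> R) t d1 d2 d3 d4 d5 :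
  is_derive f1 t d1 -> is_derive f2 t d2 -> is_derive f3 t d3 -> is_derive f4 t d4 ->
  is_derive f5 t d5 ->
  is_derive (fun s => lyap (mkState (f1 s) (f2 s) (f3 s) (f4 s) (f5 s))) t
    (lyap_deriv (mkState (f1 t) (f2 t) (f3 t) (f4 t) (f5 t)) (mkState d1 d2 d3 d4 d5)).
Proof.
  intros H1 H2 H3 H4 H5. unfold lyap, lyap_deriv; simpl. auto_derive.
  - repeat split; eexists; eassumption.
  - replace (Derive (fun x : R => f1 x) t) with d1 by (symmetry; now apply is_derive_unique).
    replace (Derive (fun x : R => f2 x) t) with d2 by (symmetry; now apply is_derive_unique).
    replace (Derive (fun x : R => f3 x) t) with d3 by (symmetry; now apply is_derive_unique).
    replace (Derive (fun x : R => f4 x) t) with d4 by (symmetry; now apply is_derive_unique).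
    replace (Derive (fun x : R => f5 x) t) with d5 by (symmetry; now apply is_derive_unique).
    field. lra.
Qed.

Lemma is_derive_lyap (y : R -> state) t D :
  (forall i, (i < 5)%nat -> is_derive (fun s => coord i (y s)) t (coord i D)) ->
  is_derive (fun s => lyap (y s)) t (lyap_deriv (y t) D).
Proof.
  intros H.
  apply (is_derive_ext
    (fun s => lyap (mkState (sS (y s)) (sE (y s)) (sI (y s)) (sR (y s)) (sV (y s))))).
  { intros s. now destruct (y s). }
  replace (lyap_deriv (y t) D)
    with (lyap_deriv (mkState (sS (y t)) (sE (y t)) (sI (y t)) (sR (y t)) (sV (y t)))
                     (mkState (sS D) (sE D) (sI D) (sR D) (sV D))) by (now destruct (y t), D).
  apply is_derive_lyap_coords;
    [apply (H 0%nat)|apply (H 1%nat)|apply (H 2%nat)|apply (H 3%nat)|apply (H 4%nat)]; lia.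
Qed.

Lemma filterlim_lyap {T} (F : (T -> Prop) -> Prop) {FF : Filter F} (y : T -> state) Y0 :
  (forall i, (i < 5)%nat -> filterlim (fun s => coord i (y s)) F (locally (coord i Y0))) ->
  filterlim (fun s => lyap (y s)) F (locally (lyap Y0)).
Proof.
  intros H.
  pose proof (H 0%nat ltac:(lia)). pose proof (H 1%nat ltac:(lia)). pose proof (H 2%nat ltac:(lia)).
  pose proof (H 3%nat ltac:(lia)). pose proof (H 4%nat ltac:(lia)). simpl in *.
  unfold lyap, Rdiv.
  repeat match goal with
  | |- filterlim (fun s => _ + _) _ _ => apply (filterlim_Rplus_fun F)
  | |- filterlim (fun s => _ * _) _ _ => apply (filterlim_Rmult_fun F)
  | |- _ => first [assumption | apply filterlim_const]
  end.
Qed.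

Lemma rel_field_clamped_bounded r i Y : 0 < r <= 1 ->
  Rabs (coord i (rel_field (clamp_state r Y))) <= 4 * (m + a + b + c + mu).
Proof.
  intros Hr. unfold clamp_state, rel_field.
  pose proof (abs_clamp_le r (sS Y) ltac:(lra)) as Bx.
  pose proof (abs_clamp_le r (sE Y) ltac:(lra)) as By.
  pose proof (abs_clamp_le r (sI Y) ltac:(lra)) as Bz.
  pose proof (abs_clamp_le r (sR Y) ltac:(lra)) as Bu.
  pose proof (abs_clamp_le r (sV Y) ltac:(lra)) as Bv.
  set (x := clamp r (sS Y)) in *. set (y := clamp r (sE Y)) in *. set (z := clamp r (sI Y)) in *.
  set (u := clamp r (sR Y)) in *. set (v := clamp r (sV Y)) in *.
  apply Rabs_le_between in Bx, By, Bz, Bu, Bv.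
  assert (-1 <= x * z <= 1) by (split; nra).
  do 5 (destruct i as [|i]; [simpl; apply Rabs_le; split; nra|]).
  simpl. rewrite Rabs_R0. lra.
Qed.

Lemma rel_field_clamped_lipschitz r i X Y : 0 < r <= 1 ->
  Rabs (coord i (rel_field (clamp_state r X)) - coord i (rel_field (clamp_state r Y)))
    <= 5 * (m + a + b + c + mu) * dist1 X Y.
Proof.
  intros Hr. set (d := dist1 X Y).
  assert (Hd : forall j, - d <= clamp r (coord j X) - clamp r (coord j Y) <= d).
  { intros j. apply Rabs_le_between.
    eapply Rle_trans; [apply clamp_lipschitz; lra|]. apply coord_le_dist1. }
  pose proof (Hd 0%nat) as Dx. pose proof (Hd 1%nat) as Dy. pose proof (Hd 2%nat) as Dz.
  pose proof (Hd 3%nat) as Du. pose proof (Hd 4%nat) as Dv. simpl in Dx, Dy, Dz, Du, Dv.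
  pose proof (abs_clamp_le r (sS X) ltac:(lra)) as Bx.
  pose proof (abs_clamp_le r (sI Y) ltac:(lra)) as Bz.
  unfold clamp_state, rel_field.
  set (x1 := clamp r (sS X)) in *. set (y1 := clamp r (sE X)) in *. set (z1 := clamp r (sI X)) in *.
  set (u1 := clamp r (sR X)) in *. set (v1 := clamp r (sV X)) in *.
  set (x2 := clamp r (sS Y)) in *. set (y2 := clamp r (sE Y)) in *. set (z2 := clamp r (sI Y)) in *.
  set (u2 := clamp r (sR Y)) in *. set (v2 := clamp r (sV Y)) in *.
  apply Rabs_le_between in Bx, Bz.
  assert (Hxz : - (2 * d) <= x1 * z1 - x2 * z2 <= 2 * d).
  { replace (x1 * z1 - x2 * z2) with (x1 * (z1 - z2) + z2 * (x1 - x2)) by ring. split; nra. }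
  do 5 (destruct i as [|i]; [simpl; apply Rabs_le; split; nra|]).
  simpl. rewrite Rminus_0_r, Rabs_R0. pose proof (dist1_nonneg X Y).
  apply Rmult_le_pos; unfold d; lra.
Qed.

Lemma lyap_sublevel_invariant (G : state -> state) (y : R -> state) T :
  (forall Y, lyap Y < lyap_level -> G Y = rel_field Y) ->
  is_solution_on G y T -> lyap (y 0) < lyap_level ->
  forall t, 0 <= t -> Rbar_lt t T -> lyap (y t) <= lyap (y 0).
Proof.
  intros HG Hy H0 t Ht HT. apply is_solution_on_coord in Hy as [Hder Hcont].
  apply (le_init_of_derive_nonpos_on_sublevel (fun s => lyap (y s))
           (fun u => lyap_deriv (y u) (G (y u))) lyap_level t); [| | |exact H0|lra].
  - exact (filterlim_lyap (at_right 0) y (y 0) Hcont).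
  - intros u Hu. apply is_derive_lyap. intros i Hi. apply Hder; [exact Hi|lra|].
    apply (Rbar_le_lt_trans u t T); [simpl; lra|exact HT].
  - intros u Hu Hlt. rewrite HG by exact Hlt.
    eapply Rle_trans; [apply lyap_deriv_le, (coord_le_slab _ 0%nat Hlt); lia|].
    pose proof lyap_decay_pos. pose proof (sqnorm_nonneg (y u)).
    assert (0 <= lyap_decay / 2 * sqnorm (y u)) by (apply Rmult_le_pos; lra). lra.
Qed.

Lemma lyap_exp_decay (y : R -> state) T :
  is_solution_on rel_field y T -> lyap (y 0) < lyap_level ->
  forall t, 0 <= t -> Rbar_lt t T ->
  lyap (y t) <= lyap (y 0) * exp (- (lyap_decay / (2 * lyap_hi)) * t).
Proof.
  intros Hy H0 t Ht HT.
  pose proof (lyap_sublevel_invariant rel_field y T (fun _ _ => eq_refl) Hy H0) as Hstay.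
  apply is_solution_on_coord in Hy as [Hder Hcont].
  assert (HuT : forall u, u <= t -> Rbar_lt u T).
  { intros u Hu. apply (Rbar_le_lt_trans u t T); [simpl; lra|exact HT]. }
  apply (le_exp_decay (fun s => lyap (y s)) (fun u => lyap_deriv (y u) (rel_field (y u))));
    [exact Ht|exact (filterlim_lyap (at_right 0) y (y 0) Hcont)| |].
  - intros u Hu. apply is_derive_lyap. intros i Hi. apply Hder; [exact Hi|lra|apply HuT; lra].
  - intros u Hu.
    assert (Hlt : lyap (y u) < lyap_level) by (pose proof (Hstay u ltac:(lra) (HuT u ltac:(lra))); lra).
    eapply Rle_trans; [apply lyap_deriv_le, (coord_le_slab _ 0%nat Hlt); lia|].
    pose proof lyap_decay_pos. pose proof lyap_hi_pos. pose proof (lyap_le (y u)).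
    assert (Hq : lyap (y u) / lyap_hi <= sqnorm (y u)).
    { apply (Rmult_le_reg_r lyap_hi); [lra|]. unfold Rdiv.
      rewrite Rmult_assoc, Rinv_l, Rmult_1_r by lra. lra. }
    replace (- (lyap_decay / (2 * lyap_hi)) * lyap (y u))
      with (- (lyap_decay / 2) * (lyap (y u) / lyap_hi)) by (field; lra).
    apply Rmult_le_compat_neg_l; [lra|exact Hq].
Qed.

Lemma rel_field_global_solution Y0 : lyap Y0 < lyap_level ->
  exists y, is_solution_on rel_field y p_infty /\ y 0 = Y0.
Proof.
  intros H0.
  set (G := fun Y => rel_field (clamp_state lyap_slab Y)).
  pose proof lyap_slab_pos. pose proof lyap_slab_le_1.
  destruct (bounded_lipschitz_global_solution G (4 * (m + a + b + c + mu)) (5 * (m + a + b + c + mu)))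
    with (X0 := Y0) as [y [Hy Hy0]].
  - lra.
  - intros i Y. apply rel_field_clamped_bounded. lra.
  - intros i X Y. apply rel_field_clamped_lipschitz. lra.
  - assert (HG : forall Y, lyap Y < lyap_level -> G Y = rel_field Y).
    { intros Y HY. unfold G. rewrite clamp_state_id; [reflexivity|].
      intros i Hi. now apply coord_le_slab. }
    exists y. split; [|exact Hy0].
    apply (is_solution_on_ext G); [|exact Hy].
    intros t Ht _. apply HG.
    pose proof (lyap_sublevel_invariant G y p_infty HG Hy ltac:(now rewrite Hy0) t ltac:(lra) I).
    rewrite Hy0 in *. lra.
Qed.

End RelativeCoordinates.

(** * The SEIR model with vaccination *)

Ltac positivity :=
  repeat match goal with
  | H : 0 < ?x |- 0 < ?x => exact H
  | |- 0 < _ * _ => apply Rmult_lt_0_compat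
  | |- 0 < _ / _ => apply Rdiv_lt_0_compat
  | |- 0 < _ + _ => apply Rplus_lt_0_compat
  end; try lra.

Section Model.

Variables (N mu beta sigma gamma p rho : R).
Hypotheses (HN : 0 < N) (Hmu : 0 < mu) (Hbeta : 0 < beta) (Hsigma : 0 < sigma)
  (Hgamma : 0 < gamma) (Hp : 0 < p) (Hrho1 : rho < 1)
  (HR0 : repro_number N mu beta sigma gamma p rho > 1).

Let F := seirv_field N mu beta sigma gamma p rho.
Let Pe := endemic_eq N mu beta sigma gamma p rho.

(* The only place where [R0 > 1] is used. *)
Lemma endemic_I_pos : 0 < sI Pe.
Proof.
  unfold repro_number in HR0. simpl.
  set (den := (sigma + mu) * (gamma + mu) * (p + mu * N)) in *.
  set (num := mu * N * sigma * beta * (1 - rho)) in *.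
  assert (Hden : 0 < den) by (unfold den; positivity).
  assert (num / den * den = num) by (field; lra).
  apply Rdiv_lt_0_compat; [nra|positivity].
Qed.

Lemma endemic_eq_pos i : (i < 5)%nat -> 0 < coord i Pe.
Proof.
  intros Hi. pose proof endemic_I_pos as HI.
  assert (HS : 0 < sS Pe) by (simpl; positivity).
  destruct (lt5_cases i Hi) as [->|[->|[->|[->| ->]]]]; simpl coord.
  - exact HS.
  - change (0 < (gamma + mu) / sigma * sI Pe). positivity.
  - exact HI.
  - change (0 < gamma / mu * sI Pe). positivity.
  - change (0 < p / (mu * N) * sS Pe). positivity.
Qed.

(* [m] is the force of infection [beta (1 - rho) I / N] at the endemic equilibrium. *)
Let m := beta / N * (1 - rho) * sI Pe.
Let a := p / N + mu.
Let b := sigma + mu.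
Let c := gamma + mu.
Let G := rel_field m a b c mu.

Lemma seirv_field_affine i Y : (i < 5)%nat ->
  coord i (F (affine Pe Pe Y)) = coord i Pe * coord i (G Y).
Proof.
  intros Hi. destruct Y as [x y z u v].
  assert (sigma + mu <> 0) by lra. assert (gamma + mu <> 0) by lra. assert (1 - rho <> 0) by lra.
  destruct (lt5_cases i Hi) as [->|[->|[->|[->| ->]]]];
    unfold F, G, m, a, b, c, seirv_field, rel_field, affine, state_of; simpl;
    field; repeat split; lra.
Qed.

Lemma rel_params_pos : 0 < m /\ 0 < a /\ 0 < b /\ 0 < c.
Proof. pose proof endemic_I_pos. unfold m, a, b, c. repeat split; positivity. Qed.

Let Hm : 0 < m := proj1 rel_params_pos.
Let Ha : 0 < a := proj1 (proj2 rel_params_pos).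
Let Hb : 0 < b := proj1 (proj2 (proj2 rel_params_pos)).
Let Hc : 0 < c := proj2 (proj2 (proj2 rel_params_pos)).

Let V (X : state) : R := lyap m a b c mu (rel_coords Pe X).
Let level := lyap_level m a b c mu.
Let lo := lyap_lo m a b c mu.
Let hi := lyap_hi m a b c mu.

Lemma seirv_equilibrium : is_equilibrium F Pe.
Proof.
  unfold is_equilibrium. rewrite <- (affine_rel_coords Pe endemic_eq_pos Pe).
  apply state_eq. intros i Hi.
  rewrite seirv_field_affine, (rel_coords_hadamard Pe endemic_eq_pos) by exact Hi.
  destruct (lt5_cases i Hi) as [->|[->|[->|[->| ->]]]];
    unfold G, rel_field, hadamard, sub_state; simpl; ring.
Qed.

Lemma V_le X : V X <= hi * sqnorm (inv_state Pe) * sdist X Pe ^ 2.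
Proof.
  unfold V. rewrite sdist_sqnorm, pow2_sqrt by apply sqnorm_nonneg.
  rewrite (rel_coords_hadamard Pe endemic_eq_pos), Rmult_assoc.
  eapply Rle_trans; [apply lyap_le; assumption|].
  apply Rmult_le_compat_l; [apply Rlt_le, lyap_hi_pos; assumption|apply sqnorm_hadamard_le].
Qed.

Lemma sdist_sq_le X : lo * sdist X Pe ^ 2 <= sqnorm Pe * V X.
Proof.
  unfold V, lo. rewrite sdist_sqnorm, pow2_sqrt by apply sqnorm_nonneg.
  rewrite (sub_state_hadamard Pe endemic_eq_pos).
  pose proof (lyap_ge m a b c mu Hm Ha Hb Hc Hmu (rel_coords Pe X)).
  pose proof (lyap_lo_pos m a b c mu Hm Ha Hb Hc Hmu).
  pose proof (sqnorm_hadamard_le Pe (rel_coords Pe X)). pose proof (sqnorm_nonneg Pe).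
  nra.
Qed.

Lemma V_small_near_endemic r : 0 < r -> exists d, 0 < d /\ forall X, sdist X Pe < d -> V X < r.
Proof.
  intros Hr. set (C := hi * sqnorm (inv_state Pe)).
  assert (HC : 0 < C).
  { apply Rmult_lt_0_compat; [apply lyap_hi_pos; assumption|].
    apply sqnorm_pos, Rinv_0_lt_compat. exact (endemic_eq_pos 0 ltac:(lia)). }
  assert (Hrc : 0 < r / C) by positivity.
  exists (sqrt (r / C)). split; [now apply sqrt_lt_R0|]. intros X HX.
  assert (Hsd : 0 <= sdist X Pe) by (rewrite sdist_sqnorm; apply sqrt_pos).
  assert (Hsq : sdist X Pe ^ 2 < r / C).
  { rewrite <- (sqrt_sqrt (r / C)) by lra. simpl. rewrite Rmult_1_r.
    apply Rmult_le_0_lt_compat; assumption. }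
  eapply Rle_lt_trans; [apply V_le|]. fold C.
  replace r with (C * (r / C)) by (field; lra). apply Rmult_lt_compat_l; assumption.
Qed.

Lemma sdist_lt_of_V_lt e X : 0 < e -> V X < lo * e ^ 2 / sqnorm Pe -> sdist X Pe < e.
Proof.
  intros He HV. pose proof (sdist_sq_le X).
  assert (HPe : 0 < sqnorm Pe) by (apply sqnorm_pos; exact (endemic_eq_pos 0 ltac:(lia))).
  assert (Hlo : 0 < lo) by (apply lyap_lo_pos; assumption).
  assert (Hsq : sdist X Pe ^ 2 < e ^ 2).
  { apply (Rmult_lt_reg_l lo); [exact Hlo|].
    apply (Rmult_lt_compat_l (sqnorm Pe)) in HV; [|exact HPe].
    replace (sqnorm Pe * (lo * e ^ 2 / sqnorm Pe)) with (lo * e ^ 2) in HV by (field; lra). lra. }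
  apply Rnot_le_lt. intros Hle. assert (e ^ 2 <= sdist X Pe ^ 2) by (apply pow_incr; lra). lra.
Qed.

Lemma solution_rel_coords x T :
  is_solution_on F x T -> is_solution_on G (fun s => rel_coords Pe (x s)) T.
Proof. apply (is_solution_on_rel_coords Pe endemic_eq_pos F G), seirv_field_affine. Qed.

Lemma V_nonincreasing x T : is_solution_on F x T -> V (x 0) < level ->
  forall t, 0 <= t -> Rbar_lt t T -> V (x t) <= V (x 0).
Proof.
  intros Hx H0.
  exact (lyap_sublevel_invariant m a b c mu Hm Ha Hb Hc Hmu G _ T (fun _ _ => eq_refl)
           (solution_rel_coords x T Hx) H0).
Qed.

Lemma V_exp_decay x : is_solution_on F x p_infty -> V (x 0) < level ->
  forall t, 0 <= t -> V (x t) <= V (x 0) * exp (- (lyap_decay m a c / (2 * hi)) * t).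
Proof.
  intros Hx H0 t Ht.
  exact (lyap_exp_decay m a b c mu Hm Ha Hb Hc Hmu _ p_infty (solution_rel_coords x p_infty Hx) H0
           t Ht I).
Qed.

Lemma seirv_global_solution X0 : V X0 < level ->
  exists x, is_solution_on F x p_infty /\ x 0 = X0.
Proof.
  intros H0.
  destruct (rel_field_global_solution m a b c mu Hm Ha Hb Hc Hmu _ H0) as [y [Hy Hy0]].
  exists (fun s => affine Pe Pe (y s)). split.
  - exact (is_solution_on_affine F G Pe Pe y p_infty seirv_field_affine Hy).
  - simpl. rewrite Hy0. exact (affine_rel_coords Pe endemic_eq_pos X0).
Qed.

Lemma seirv_lyap_stable : lyap_stable F Pe.
Proof.
  assert (Hlevel : 0 < level) by (apply lyap_level_pos; assumption).
  split.
  - intros eps Heps.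
    set (r := Rmin level (lo * eps ^ 2 / sqnorm Pe)).
    assert (Hr : 0 < r).
    { apply Rmin_pos; [exact Hlevel|]. apply Rdiv_lt_0_compat.
      - apply Rmult_lt_0_compat; [apply lyap_lo_pos; assumption|apply pow_lt; lra].
      - apply sqnorm_pos. exact (endemic_eq_pos 0 ltac:(lia)). }
    destruct (V_small_near_endemic r Hr) as [d [Hd Hnear]].
    exists d. split; [exact Hd|]. intros T x Hx H0 t Ht HT.
    pose proof (Hnear _ H0). pose proof (Rmin_l level (lo * eps ^ 2 / sqnorm Pe)).
    pose proof (Rmin_r level (lo * eps ^ 2 / sqnorm Pe)).
    pose proof (V_nonincreasing x T Hx ltac:(unfold r in *; lra) t Ht HT).
    apply sdist_lt_of_V_lt; [exact Heps|]. unfold r in *. lra.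
  - destruct (V_small_near_endemic _ Hlevel) as [d [Hd Hnear]].
    exists d. split; [exact Hd|]. intros X0 HX0. now apply seirv_global_solution, Hnear.
Qed.

Lemma seirv_attractive : attractive F Pe.
Proof.
  assert (Hlevel : 0 < level) by (apply lyap_level_pos; assumption).
  assert (Hlo : 0 < lo) by (apply lyap_lo_pos; assumption).
  destruct (V_small_near_endemic _ Hlevel) as [d [Hd Hnear]].
  exists d. split; [exact Hd|]. intros x Hx H0.
  set (k := lyap_decay m a c / (2 * hi)).
  assert (Hk : 0 < k).
  { apply Rdiv_lt_0_compat; [apply lyap_decay_pos; assumption|].
    apply Rmult_lt_0_compat; [lra|apply lyap_hi_pos; assumption]. }
  apply (is_lim_of_sq_le_exp _ (sqnorm Pe * V (x 0) / lo) k Hk).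
  intros t Ht. split; [rewrite sdist_sqnorm; apply sqrt_pos|].
  pose proof (V_exp_decay x Hx (Hnear _ H0) t Ht) as Hdecay. fold k in Hdecay.
  pose proof (sdist_sq_le (x t)) as Hsd. pose proof (sqnorm_nonneg Pe).
  apply (Rmult_le_reg_l lo); [exact Hlo|].
  replace (lo * (sqnorm Pe * V (x 0) / lo * exp (- k * t)))
    with (sqnorm Pe * (V (x 0) * exp (- k * t))) by (field; lra).
  eapply Rle_trans; [exact Hsd|]. apply Rmult_le_compat_l; [lra|exact Hdecay].
Qed.

End Model.

Theorem mainTheorem6 (N mu beta sigma gamma p rho : R) :
  0 < N -> 0 < mu -> 0 < beta -> 0 < sigma -> 0 < gamma -> 0 < p ->
  0 < rho -> rho < 1 ->
  repro_number N mu beta sigma gamma p rho > 1 ->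
  is_equilibrium (seirv_field N mu beta sigma gamma p rho)
                 (endemic_eq N mu beta sigma gamma p rho) /\
  asymptotically_stable (seirv_field N mu beta sigma gamma p rho)
                        (endemic_eq N mu beta sigma gamma p rho).
Proof.
  (* The argument works for [0 <= rho < 1]. *)
  intros HN Hmu Hbeta Hsigma Hgamma Hp _ Hrho1 HR0.
  split; [|split].
  - now apply seirv_equilibrium.
  - now apply seirv_lyap_stable.
  - now apply seirv_attractive.
Qed.
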